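(* If a typing environment $\Gamma$ is live and $\Gamma\to\Gamma'$, then $\Gamma'$ is live.
   Context: Sorts: $\mathsf{S} ::= \mathtt{nat} \mid \mathtt{int} \mid \mathtt{bool} \mid \mathtt{unit}$; subsorting $\leq:$ is the least reflexive relation on sorts with $\mathtt{nat}\leq:\mathtt{int}$. Session types: $\mathbb{T} ::= \&_{i\in I}\mathsf{p}?\ell_i(\mathsf{S}_i).\mathbb{T}_i \mid \oplus_{i\in I}\mathsf{p}!\ell_i(\mathsf{S}_i).\mathbb{T}_i \mid \mathtt{end} \mid \mu\mathbf{t}.\mathbb{T} \mid \mathbf{t}$ ($I$ finite nonempty, distinct labels, guarded recursion, closed types); $\equiv$ on types is the least congruence with $\mu\mathbf{t}.\mathbb{T}\equiv\mathbb{T}\{\mu\mathbf{t}.\mathbb{T}/\mathbf{t}\}$. Queue types $\sigma ::= \epsilon \mid \mathsf{p}!\ell(\mathsf{S}) \mid \sigma\cdot\sigma$, with $\equiv$ the least congruence making $\cdot$ associative with unit $\epsilon$ and swapping adjacent messages $\mathsf{p}_1!\ell_1(\mathsf{S}_1)\cdot\mathsf{p}_2!\ell_2(\mathsf{S}_2)$ when $\mathsf{p}_1\neq\mathsf{p}_2$. A typing environment $\Gamma$ is a finite map from participants to pairs $(\sigma,\mathbb{T})$. $(\sigma_1,\mathbb{T}_1)\equiv(\sigma_2,\mathbb{T}_2)$ iff both components are $\equiv$; $\Gamma\equiv\Gamma'$ iff entries of common participants are $\equiv$ and entries of participants in only one domain are $\equiv(\epsilon,\mathtt{end})$. Reductions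 $\Gamma\xrightarrow{\alpha}\Gamma'$: (e-rcv) $\mathsf{p}{:}(\mathsf{q}!\ell_k(\mathsf{S}'_k)\cdot\sigma,\mathbb{T}_\mathsf{p}),\mathsf{q}{:}(\sigma_\mathsf{q},\&_{i\in I}\mathsf{p}?\ell_i(\mathsf{S}_i).\mathbb{T}_i),\Gamma\xrightarrow{\mathsf{q}:\mathsf{p}?\ell_k}\mathsf{p}{:}(\sigma,\mathbb{T}_\mathsf{p}),\mathsf{q}{:}(\sigma_\mathsf{q},\mathbb{T}_k),\Gamma$ if $k\in I$ and $\mathsf{S}'_k\leq:\mathsf{S}_k$; (e-send) $\mathsf{p}{:}(\sigma,\oplus_{i\in I}\mathsf{q}!\ell_i(\mathsf{S}_i).\mathbb{T}_i),\Gamma\xrightarrow{\mathsf{p}:\mathsf{q}!\ell_k}\mathsf{p}{:}(\sigma\cdot\mathsf{q}!\ell_k(\mathsf{S}_k),\mathbb{T}_k),\Gamma$ if $k\in I$; (e-struct) $\Gamma\equiv\Gamma_1\xrightarrow{\alpha}\Gamma_1'\equiv\Gamma'$ implies $\Gamma\xrightarrow{\alpha}\Gamma'$. $\Gamma\to\Gamma'$ means $\Gamma\xrightarrow{\alpha}\Gamma'$ for some $\alpha$. A path is a finite or infinite sequence $(\Gamma_i)_{i\in I}$ ($I=\{0,1,\dots\}$ consecutive naturals) with $\Gamma_i\to\Gamma_{i+1}$ whenever $i+1\in I$. Fair: for all $i\in I$, (F1) if $\Gamma_i\xrightarrow{\mathsf{p}:\mathsf{q}!\ell}\Gamma'$ for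 some $\Gamma'$ then $\Gamma_k\xrightarrow{\mathsf{p}:\mathsf{q}!\ell'}\Gamma_{k+1}$ for some $k\geq i$ with $k+1\in I$ and some $\ell'$; (F2) if $\Gamma_i\xrightarrow{\mathsf{p}:\mathsf{q}?\ell}\Gamma'$ for some $\Gamma'$ then $\Gamma_k\xrightarrow{\mathsf{p}:\mathsf{q}?\ell}\Gamma_{k+1}$ for some $k\geq i$ with $k+1\in I$. Live: for all $i\in I$, (L1) if $\Gamma_i(\mathsf{p})\equiv(\mathsf{q}!\ell(\mathsf{S})\cdot\sigma,\mathbb{T})$ then $\Gamma_k\xrightarrow{\mathsf{q}:\mathsf{p}?\ell}\Gamma_{k+1}$ for some $k\geq i$ with $k+1\in I$; (L2) if $\Gamma_i(\mathsf{p})\equiv(\sigma_\mathsf{p},\&_{j\in J}\mathsf{q}?\ell_j(\mathsf{S}_j).\mathbb{T}_j)$ then $\Gamma_k\xrightarrow{\mathsf{p}:\mathsf{q}?\ell'}\Gamma_{k+1}$ for some $k\geq i$ with $k+1\in I$ and some $\ell'$. $\Gamma$ is live iff every fair path with $\Gamma_0=\Gamma$ is live. *)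

From Stdlib Require Import List Arith.
Import ListNotations.

Inductive sort : Type := SNat | SInt | SBool | SUnit.

Inductive subsort : sort -> sort -> Prop :=
| subsort_refl s : subsort s s
| subsort_nat_int : subsort SNat SInt.

(** Session types, recursion variables as de Bruijn indices.
    TBra p bs = &_{i} p?l_i(S_i).T_i ; TSel p bs = (+)_{i} p!l_i(S_i).T_i *)
Inductive stype : Type :=
| TBra (p : nat) (bs : list (nat * sort * stype))
| TSel (p : nat) (bs : list (nat * sort * stype))
| TEnd
| TRec (T : stype)
| TVar (n : nat).

Fixpoint lift (c : nat) (T : stype) : stype :=
  match T with
  | TBra p bs =>
      TBra p ((fix go (bs : list (nat * sort * stype)) :=
                 match bs with
                 | [] => []
                 | (l, s, U) :: bs' => (l, s, lift c U) :: go bs'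
                 end) bs)
  | TSel p bs =>
      TSel p ((fix go (bs : list (nat * sort * stype)) :=
                 match bs with
                 | [] => []
                 | (l, s, U) :: bs' => (l, s, lift c U) :: go bs'
                 end) bs)
  | TEnd => TEnd
  | TRec U => TRec (lift (S c) U)
  | TVar n => if Nat.ltb n c then TVar n else TVar (S n)
  end.

Fixpoint subst (k : nat) (U : stype) (T : stype) : stype :=
  match T with
  | TBra p bs =>
      TBra p ((fix go (bs : list (nat * sort * stype)) :=
                 match bs with
                 | [] => []
                 | (l, s, V) :: bs' => (l, s, subst k U V) :: go bs'
                 end) bs)
  | TSel p bs =>
      TSel p ((fix go (bs : list (nat * sort * stype)) :=
                 match bs with
                 | [] => []
                 | (l, s, V) :: bs' => (l, s, subst k U V) :: go bs'
                 end) bs)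
  | TEnd => TEnd
  | TRec V => TRec (subst (S k) (lift 0 U) V)
  | TVar n =>
      if Nat.eqb n k then U
      else if Nat.ltb k n then TVar (pred n) else TVar n
  end.

Fixpoint closed_at (k : nat) (T : stype) : Prop :=
  match T with
  | TBra _ bs | TSel _ bs =>
      (fix go (bs : list (nat * sort * stype)) :=
         match bs with
         | [] => True
         | (_, _, U) :: bs' => closed_at k U /\ go bs'
         end) bs
  | TEnd => True
  | TRec U => closed_at (S k) U
  | TVar n => n < k
  end.

Fixpoint mu_var (T : stype) : Prop :=
  match T with
  | TVar _ => True
  | TRec U => mu_var U
  | _ => False
  end.

Fixpoint guarded (T : stype) : Prop :=
  match T with
  | TBra _ bs | TSel _ bs =>
      (fix go (bs : list (nat * sort * stype)) :=
         match bs with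
         | [] => True
         | (_, _, U) :: bs' => guarded U /\ go bs'
         end) bs
  | TEnd => True
  | TRec U => ~ mu_var U /\ guarded U
  | TVar _ => True
  end.

Fixpoint branches_ok (T : stype) : Prop :=
  match T with
  | TBra _ bs | TSel _ bs =>
      bs <> [] /\ NoDup (map (fun b => fst (fst b)) bs) /\
      (fix go (bs : list (nat * sort * stype)) :=
         match bs with
         | [] => True
         | (_, _, U) :: bs' => branches_ok U /\ go bs'
         end) bs
  | TEnd => True
  | TRec U => branches_ok U
  | TVar _ => True
  end.

Definition wf_type (T : stype) : Prop :=
  closed_at 0 T /\ guarded T /\ branches_ok T.

Inductive teq : stype -> stype -> Prop :=
| teq_refl T : teq T T
| teq_sym T U : teq T U -> teq U T
| teq_trans T U V : teq T U -> teq U V -> teq T V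
| teq_unfold T : teq (TRec T) (subst 0 (TRec T) T)
| teq_rec T U : teq T U -> teq (TRec T) (TRec U)
| teq_bra p b1 b2 l s T U :
    teq T U -> teq (TBra p (b1 ++ (l, s, T) :: b2)) (TBra p (b1 ++ (l, s, U) :: b2))
| teq_sel p b1 b2 l s T U :
    teq T U -> teq (TSel p (b1 ++ (l, s, T) :: b2)) (TSel p (b1 ++ (l, s, U) :: b2)).

(** Queue types: sequences of messages (receiver, label, sort) = q!l(S);
    lists quotient associativity and unit of (.) with epsilon = []. *)
Definition msg : Type := (nat * nat * sort)%type.
Definition queue : Type := list msg.

Inductive qeq : queue -> queue -> Prop :=
| qeq_refl s : qeq s s
| qeq_sym s t : qeq s t -> qeq t s
| qeq_trans s t u : qeq s t -> qeq t u -> qeq s u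
| qeq_swap s1 s2 q1 l1 S1 q2 l2 S2 :
    q1 <> q2 ->
    qeq (s1 ++ (q1, l1, S1) :: (q2, l2, S2) :: s2)
        (s1 ++ (q2, l2, S2) :: (q1, l1, S1) :: s2).

Definition entry : Type := (queue * stype)%type.

Definition eeq (e e' : entry) : Prop := qeq (fst e) (fst e') /\ teq (snd e) (snd e').

Record env : Type := mkEnv {
  efun : nat -> option entry;
  efin : exists l : list nat, forall p, efun p <> None -> In p l;
  ewf : forall p e, efun p = Some e -> wf_type (snd e)
}.

Definition env_eq (G G' : env) : Prop :=
  forall p,
    match efun G p, efun G' p with
    | Some e, Some e' => eeq e e'
    | Some e, None => eeq e ([], TEnd)
    | None, Some e' => eeq e' ([], TEnd)
    | None, None => True
    end.

(** Transition labels: LRcv p q l is p:q?l ; LSnd p q l is p:q!l *)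
Inductive lab : Type :=
| LRcv (p q l : nat)
| LSnd (p q l : nat).

Inductive red : env -> lab -> env -> Prop :=
| red_rcv (G G' : env) (p q l : nat) (S' Sk : sort) (sg sgq : queue)
          (Tp Tk : stype) (bs : list (nat * sort * stype)) :
    p <> q ->
    efun G p = Some ((q, l, S') :: sg, Tp) ->
    efun G q = Some (sgq, TBra p bs) ->
    In (l, Sk, Tk) bs ->
    subsort S' Sk ->
    efun G' p = Some (sg, Tp) ->
    efun G' q = Some (sgq, Tk) ->
    (forall r, r <> p -> r <> q -> efun G' r = efun G r) ->
    red G (LRcv q p l) G'
| red_send (G G' : env) (p q l : nat) (Sk : sort) (sg : queue)
           (Tk : stype) (bs : list (nat * sort * stype)) :
    efun G p = Some (sg, TSel q bs) ->
    In (l, Sk, Tk) bs ->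
    efun G' p = Some (sg ++ [(q, l, Sk)], Tk) ->
    (forall r, r <> p -> efun G' r = efun G r) ->
    red G (LSnd p q l) G'
| red_struct (G G1 G1' G' : env) (a : lab) :
    env_eq G G1 -> red G1 a G1' -> env_eq G1' G' -> red G a G'.

Definition step (G G' : env) : Prop := exists a, red G a G'.

(** Paths: g indexed by I = {0,...,n-1} (len = Some n) or I = N (len = None). *)
Definition inI (len : option nat) (i : nat) : Prop :=
  match len with None => True | Some n => i < n end.

Definition is_path (g : nat -> env) (len : option nat) : Prop :=
  forall i, inI len (S i) -> step (g i) (g (S i)).

Definition fair (g : nat -> env) (len : option nat) : Prop :=
  forall i, inI len i ->
    (forall p q l G', red (g i) (LSnd p q l) G' ->
       exists k l', i <= k /\ inI len (S k) /\ red (g k) (LSnd p q l') (g (S k))) /\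
    (forall p q l G', red (g i) (LRcv p q l) G' ->
       exists k, i <= k /\ inI len (S k) /\ red (g k) (LRcv p q l) (g (S k))).

Definition live_path (g : nat -> env) (len : option nat) : Prop :=
  forall i, inI len i ->
    (forall p q l (s : sort) (sg : queue) (T : stype) e,
       efun (g i) p = Some e -> eeq e ((q, l, s) :: sg, T) ->
       exists k, i <= k /\ inI len (S k) /\ red (g k) (LRcv q p l) (g (S k))) /\
    (forall p q (sg : queue) (bs : list (nat * sort * stype)) e,
       efun (g i) p = Some e -> eeq e (sg, TBra q bs) ->
       exists k l', i <= k /\ inI len (S k) /\ red (g k) (LRcv p q l') (g (S k))).

Definition live (G : env) : Prop :=
  forall (g : nat -> env) (len : option nat),
    inI len 0 -> (forall p, efun (g 0) p = efun G p) ->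
    is_path g len -> fair g len -> live_path g len.

(* Prepend Gamma to a fair path from Gamma'.  The result is a path from Gamma,
   and it is fair: an action enabled in Gamma is either the step Gamma -> Gamma'
   itself (up to the label, for a send) or still enabled in Gamma', because a
   step whose subject is another participant leaves that participant's type
   unchanged up to unfolding and only appends to the messages addressed to it.
   Liveness of Gamma makes the prepended path live, hence also its tail.
   The two invariants behind this: the head prefix of a session type survives
   unfolding (so a selection is never equivalent to a branching, and the peer
   is determined), and swapping queued messages keeps, for each receiver, the
   subsequence of messages addressed to it. *)
From Stdlib Require Import List Arith Lia Setoid Morphisms.
Import ListNotations.

#[local] Instance teq_Equivalence : Equivalence teq :=
  Build_Equivalence _ teq_refl teq_sym teq_trans.
#[local] Instance qeq_Equivalence : Equivalence qeq :=
  Build_Equivalence _ qeq_refl qeq_sym qeq_trans.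

Inductive shead : Type := HBra (p : nat) | HSel (p : nat) | HEnd | HLoop.

Definition scons (x : shead) (r : nat -> shead) (n : nat) : shead :=
  match n with 0 => x | S n => r n end.

(* [head T r] is the outermost prefix of [T] after unfolding all leading
   recursions, where free variable [n] stands for a type with head [r n];
   the unguarded [mu t. t] never reaches a prefix and gets [HLoop]. *)
Fixpoint head (T : stype) (r : nat -> shead) : shead :=
  match T with
  | TBra p _ => HBra p
  | TSel p _ => HSel p
  | TEnd => HEnd
  | TRec U => head U (scons HLoop r)
  | TVar n => r n
  end.

Lemma head_ext T : forall r r', (forall n, r n = r' n) -> head T r = head T r'.
Proof.
  induction T; intros r r' E; simpl; auto.
  apply IHT. intros [|n]; simpl; auto.
Qed.

Lemma head_lift U : forall c r,
  head (lift c U) r = head U (fun n => if n <? c then r n else r (S n)).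
Proof.
  induction U; intros c r; simpl; auto.
  - rewrite IHU. apply head_ext. intros [|n]; simpl; auto.
  - destruct (n <? c); reflexivity.
Qed.

Lemma head_subst T : forall k U r,
  head (subst k U T) r =
  head T (fun n => if n =? k then head U r else if k <? n then r (pred n) else r n).
Proof.
  induction T; intros k U r; simpl; auto.
  - rewrite IHT. apply head_ext. intros [|m]; simpl; [reflexivity|].
    rewrite head_lift, (head_ext U _ r) by reflexivity.
    destruct (m =? k); [reflexivity|].
    change (S k <? S m) with (k <? m).
    destruct (Nat.ltb_spec k m), m; simpl; auto; lia.
  - destruct (n =? k); auto. destruct (k <? n); auto.
Qed.

Lemma head_const_or_var T :
  (exists c, forall r, head T r = c) \/ (exists n, forall r, head T r = r n).
Proof.
  induction T; simpl; eauto.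
  destruct IHT as [[c Hc]|[[|n] Hn]].
  - left; exists c; intros; auto.
  - left; exists HLoop; intros r; rewrite Hn; reflexivity.
  - right; exists n; intros r; rewrite Hn; reflexivity.
Qed.

Lemma head_unfold T r : head (subst 0 (TRec T) T) r = head (TRec T) r.
Proof.
  rewrite head_subst. simpl.
  destruct (head_const_or_var T) as [[c Hc]|[[|n] Hn]]; rewrite ?Hc, ?Hn; reflexivity.
Qed.

Lemma teq_head T U : teq T U -> forall r, head T r = head U r.
Proof.
  induction 1; intros r; simpl; auto.
  - rewrite IHteq1; auto.
  - symmetry; apply head_unfold.
Qed.

Lemma teq_sel_bra q bs p bs' : ~ teq (TSel q bs) (TBra p bs').
Proof. intros E. discriminate (teq_head _ _ E (fun _ => HLoop)). Qed.

Lemma teq_sel_inj q bs p bs' : teq (TSel q bs) (TSel p bs') -> q = p.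
Proof. intros E. injection (teq_head _ _ E (fun _ => HLoop)); auto. Qed.

Lemma teq_bra_inj q bs p bs' : teq (TBra q bs) (TBra p bs') -> q = p.
Proof. intros E. injection (teq_head _ _ E (fun _ => HLoop)); auto. Qed.

Lemma qeq_cons x s t : qeq s t -> qeq (x :: s) (x :: t).
Proof.
  induction 1; try (econstructor; eauto; fail).
  apply (qeq_swap (x :: s1)); auto.
Qed.

Lemma qeq_app s t u : qeq s t -> qeq (s ++ u) (t ++ u).
Proof.
  induction 1; try (econstructor; eauto; fail).
  rewrite <- !app_assoc. apply qeq_swap; auto.
Qed.

#[local] Instance app_qeq_Proper : Proper (qeq ==> eq ==> qeq) (@app msg).
Proof. intros s t E u u' <-. apply qeq_app, E. Qed.

Definition qfilter (q : nat) (s : queue) : queue :=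
  filter (fun m => fst (fst m) =? q) s.

Lemma qeq_qfilter s t : qeq s t -> forall q, qfilter q s = qfilter q t.
Proof.
  induction 1; intros q; auto.
  - rewrite IHqeq1; auto.
  - unfold qfilter. rewrite !filter_app. f_equal. simpl.
    destruct (Nat.eqb_spec q1 q), (Nat.eqb_spec q2 q); congruence.
Qed.

Lemma qfilter_cons_qeq q l S s f :
  qfilter q s = (q, l, S) :: f -> exists s', qeq s ((q, l, S) :: s').
Proof.
  revert f; induction s as [|[[q0 l0] S0] s IH]; intros f E; simpl in E;
    [discriminate|].
  destruct (Nat.eqb_spec q0 q).
  - injection E; intros; subst. exists s; reflexivity.
  - destruct (IH f E) as [s' Hs']. exists ((q0, l0, S0) :: s').
    rewrite (qeq_cons _ _ _ Hs').
    apply (qeq_swap [] s' q0 l0 S0 q l S); auto.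
Qed.

(* A participant outside the domain reads as [(epsilon, end)], as in [env_eq]. *)
Definition queue_at (G : env) (p : nat) : queue :=
  match efun G p with Some e => fst e | None => [] end.
Definition type_at (G : env) (p : nat) : stype :=
  match efun G p with Some e => snd e | None => TEnd end.

Lemma env_eq_queue G H : env_eq G H -> forall p, qeq (queue_at G p) (queue_at H p).
Proof.
  intros E p. specialize (E p). unfold queue_at.
  destruct (efun G p), (efun H p); try destruct E; simpl in *; auto; try reflexivity.
  symmetry; auto.
Qed.

Lemma env_eq_type G H : env_eq G H -> forall p, teq (type_at G p) (type_at H p).
Proof.
  intros E p. specialize (E p). unfold type_at.
  destruct (efun G p), (efun H p); try destruct E; simpl in *; auto; try reflexivity.
  symmetry; auto.
Qed.

Lemma env_eq_efun G H : (forall p, efun G p = efun H p) -> env_eq G H.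
Proof.
  intros E p. rewrite E. destruct (efun H p); [split|]; reflexivity.
Qed.

Lemma wf_type_at G p : wf_type (type_at G p).
Proof.
  unfold type_at. destruct (efun G p) eqn:E.
  - exact (ewf G p _ E).
  - repeat split.
Qed.

Lemma wf_bra_branch p bs l s T : wf_type (TBra p bs) -> In (l, s, T) bs -> wf_type T.
Proof.
  unfold wf_type; simpl. intros [Hc [Hg [_ [_ Hb]]]] Hin.
  induction bs as [|[[l' s'] T'] bs IH]; simpl in *; [contradiction|].
  destruct Hc, Hg, Hb, Hin as [E|E]; [injection E; intros; subst|]; auto.
Qed.

(* [wf_type (TSel p bs)] and [wf_type (TBra p bs)] are convertible. *)
Lemma wf_sel_branch p bs l s T : wf_type (TSel p bs) -> In (l, s, T) bs -> wf_type T.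
Proof. exact (wf_bra_branch p bs l s T). Qed.

Definition upd (G : env) (p : nat) (e : entry) (W : wf_type (snd e)) : env.
Proof.
  refine (mkEnv (fun r => if r =? p then Some e else efun G r) _ _).
  - destruct (efin G) as [l Hl]. exists (p :: l). intros r Hr.
    destruct (Nat.eqb_spec r p); [left | right]; auto.
  - intros r e' Hr. destruct (r =? p).
    + injection Hr; intros; subst; auto.
    + exact (ewf G r e' Hr).
Defined.

Lemma efun_upd_same G p e W : efun (upd G p e W) p = Some e.
Proof. simpl. rewrite Nat.eqb_refl. reflexivity. Qed.

Lemma efun_upd_other G p e W r : r <> p -> efun (upd G p e W) r = efun G r.
Proof. simpl. intros. destruct (Nat.eqb_spec r p); congruence. Qed.

Lemma env_eq_upd G p e W : eeq (queue_at G p, type_at G p) e -> env_eq G (upd G p e W).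
Proof.
  intros [Hq Ht] r. simpl. destruct (Nat.eqb_spec r p) as [->|].
  - unfold queue_at, type_at in *. destruct (efun G p) as [[s T]|]; simpl in *.
    + split; auto.
    + split; symmetry; auto.
  - destruct (efun G r); [split|]; reflexivity.
Qed.

Lemma red_env_eq_l G G1 a H : env_eq G G1 -> red G1 a H -> red G a H.
Proof. intros E R. apply (red_struct G G1 H H a E R), env_eq_efun; reflexivity. Qed.

(* The witness type must be well formed, since an environment holding it is
   built when the action is fired. *)
Inductive send_ready (G : env) (p q l : nat) : Prop :=
  SendReady bs Sk Tk :
    teq (type_at G p) (TSel q bs) -> wf_type (TSel q bs) -> In (l, Sk, Tk) bs ->
    send_ready G p q l.

(* [qfilter] makes the condition invariant under swapping messages
   addressed to different receivers. *)
Inductive rcv_ready (G : env) (q p l : nat) : Prop :=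
  RcvReady S' f bs Sk Tk :
    p <> q -> qfilter q (queue_at G p) = (q, l, S') :: f ->
    teq (type_at G q) (TBra p bs) -> wf_type (TBra p bs) -> In (l, Sk, Tk) bs ->
    subsort S' Sk -> rcv_ready G q p l.

Definition ready (G : env) (a : lab) : Prop :=
  match a with
  | LSnd p q l => send_ready G p q l
  | LRcv q p l => rcv_ready G q p l
  end.

Definition subject (a : lab) : nat :=
  match a with LSnd p _ _ | LRcv p _ _ => p end.

(* What a reduction guarantees up to [env_eq]; the subject's new type is left
   unconstrained, as only the persistence of other actions matters. *)
Inductive red_effect (G : env) : lab -> env -> Prop :=
| effect_send G' p q l Sk :
    send_ready G p q l ->
    qeq (queue_at G' p) (queue_at G p ++ [(q, l, Sk)]) ->
    (forall r, r <> p -> qeq (queue_at G' r) (queue_at G r)) ->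
    (forall r, r <> p -> teq (type_at G' r) (type_at G r)) ->
    red_effect G (LSnd p q l) G'
| effect_rcv G' q p l S' s :
    rcv_ready G q p l ->
    qeq (queue_at G p) ((q, l, S') :: s) -> qeq (queue_at G' p) s ->
    (forall r, r <> p -> qeq (queue_at G' r) (queue_at G r)) ->
    (forall r, r <> q -> teq (type_at G' r) (type_at G r)) ->
    red_effect G (LRcv q p l) G'.

Lemma red_effect_ready G a G' : red_effect G a G' -> ready G a.
Proof. destruct 1; assumption. Qed.

Lemma ready_env_eq G G1 a : env_eq G G1 -> ready G1 a -> ready G a.
Proof.
  intros E. destruct a as [q p l|p q l]; simpl.
  - intros [S' f bs Sk Tk Hpq Hf Ht Hw Hin Hs].
    apply (RcvReady G q p l S' f bs Sk Tk); auto.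
    + rewrite (qeq_qfilter _ _ (env_eq_queue G G1 E p)). exact Hf.
    + rewrite (env_eq_type G G1 E q). exact Ht.
  - intros [bs Sk Tk Ht Hw Hin].
    apply (SendReady G p q l bs Sk Tk); auto.
    rewrite (env_eq_type G G1 E p). exact Ht.
Qed.

Lemma red_effect_env_eq G G1 a G1' G' :
  env_eq G G1 -> red_effect G1 a G1' -> env_eq G1' G' -> red_effect G a G'.
Proof.
  intros E R E'.
  pose proof (env_eq_queue G G1 E) as Q1. pose proof (env_eq_type G G1 E) as T1.
  pose proof (env_eq_queue G1' G' E') as Q2. pose proof (env_eq_type G1' G' E') as T2.
  destruct R as [G1' p q l Sk Hr Hp Hq Ht|G1' q p l S' s Hr Hp Hp' Hq Ht].
  - apply (effect_send G G' p q l Sk).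
    + exact (ready_env_eq G G1 (LSnd p q l) E Hr).
    + rewrite <- Q2, Q1. exact Hp.
    + intros r Hne. rewrite <- Q2, Q1. auto.
    + intros r Hne. rewrite <- T2, T1. auto.
  - apply (effect_rcv G G' q p l S' s).
    + exact (ready_env_eq G G1 (LRcv q p l) E Hr).
    + rewrite Q1. exact Hp.
    + rewrite <- Q2. exact Hp'.
    + intros r Hne. rewrite <- Q2, Q1. auto.
    + intros r Hne. rewrite <- T2, T1. auto.
Qed.

Lemma red_red_effect G a G' : red G a G' -> red_effect G a G'.
Proof.
  induction 1 as [G G' p q l S' Sk s sq Tp Tk bs Hpq Hp Hq Hin Hs Hp' Hq' Hr
                 |G G' p q l Sk s Tk bs Hp Hin Hp' Hr
                 |G G1 G1' G' a E _ IH E'].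
  - assert (Hready : rcv_ready G q p l).
    { apply (RcvReady G q p l S' (qfilter q s) bs Sk Tk); auto.
      - unfold queue_at, qfilter. rewrite Hp. simpl. rewrite Nat.eqb_refl. reflexivity.
      - unfold type_at. rewrite Hq. reflexivity.
      - exact (ewf G q _ Hq). }
    apply (effect_rcv G G' q p l S' s Hready); unfold queue_at, type_at.
    + rewrite Hp. reflexivity.
    + rewrite Hp'. reflexivity.
    + intros r Hne. destruct (Nat.eq_dec r q) as [->|]; [rewrite Hq, Hq'|rewrite Hr]; auto;
        reflexivity.
    + intros r Hne. destruct (Nat.eq_dec r p) as [->|]; [rewrite Hp, Hp'|rewrite Hr]; auto;
        reflexivity.
  - assert (Hready : send_ready G p q l).
    { apply (SendReady G p q l bs Sk Tk); auto.
      - unfold type_at. rewrite Hp. reflexivity.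
      - exact (ewf G p _ Hp). }
    apply (effect_send G G' p q l Sk Hready); unfold queue_at, type_at.
    + rewrite Hp, Hp'. reflexivity.
    + intros r Hne. rewrite Hr; auto. reflexivity.
    + intros r Hne. rewrite Hr; auto. reflexivity.
  - exact (red_effect_env_eq G G1 a G1' G' E IH E').
Qed.

Lemma send_ready_red G p q l : send_ready G p q l -> exists H, red G (LSnd p q l) H.
Proof.
  intros [bs Sk Tk Ht Hw Hin].
  set (G1 := upd G p (queue_at G p, TSel q bs) Hw).
  exists (upd G p (queue_at G p ++ [(q, l, Sk)], Tk) (wf_sel_branch q bs l Sk Tk Hw Hin)).
  apply (red_env_eq_l G G1).
  - apply env_eq_upd. split; simpl; [reflexivity | exact Ht].
  - apply (red_send G1 _ p q l Sk (queue_at G p) Tk bs); try apply efun_upd_same; auto.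
    intros r Hne. unfold G1. rewrite !efun_upd_other; auto.
Qed.

Lemma rcv_ready_red G q p l : rcv_ready G q p l -> exists H, red G (LRcv q p l) H.
Proof.
  intros [S' f bs Sk Tk Hpq Hf Ht Hw Hin Hs].
  destruct (qfilter_cons_qeq _ _ _ _ _ Hf) as [s Hqp].
  set (Gp := upd G p ((q, l, S') :: s, type_at G p) (wf_type_at G p)).
  set (G1 := upd Gp q (queue_at G q, TBra p bs) Hw).
  set (G1' := upd G p (s, type_at G p) (wf_type_at G p)).
  exists (upd G1' q (queue_at G q, Tk) (wf_bra_branch p bs l Sk Tk Hw Hin)).
  apply (red_env_eq_l G Gp); [|apply (red_env_eq_l Gp G1)].
  - apply env_eq_upd. split; simpl; [exact Hqp | reflexivity].
  - apply env_eq_upd. unfold queue_at, type_at, Gp. rewrite efun_upd_other by auto.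
    split; simpl; [reflexivity | exact Ht].
  - apply (red_rcv G1 _ p q l S' Sk s (queue_at G q) (type_at G p) Tk bs Hpq); auto;
      unfold G1, Gp, G1'.
    + rewrite (efun_upd_other _ q), efun_upd_same; auto.
    + apply efun_upd_same.
    + rewrite (efun_upd_other _ q), efun_upd_same; auto.
    + apply efun_upd_same.
    + intros r Hr1 Hr2. rewrite !efun_upd_other; auto.
Qed.

Lemma red_effect_type_frame G a G' r : red_effect G a G' -> r <> subject a ->
  teq (type_at G' r) (type_at G r).
Proof. destruct 1; simpl; auto. Qed.

Lemma red_effect_qfilter_app G a G' q r : red_effect G a G' -> subject a <> q ->
  exists t, qfilter q (queue_at G' r) = qfilter q (queue_at G r) ++ t.
Proof.
  destruct 1 as [G' p q' l Sk _ Hp Hq _|G' q' p l S' s _ Hp Hp' Hq _]; simpl; intros Hne.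
  - destruct (Nat.eq_dec r p) as [->|].
    + exists (qfilter q [(q', l, Sk)]).
      rewrite (qeq_qfilter _ _ Hp). apply filter_app.
    + exists []. rewrite app_nil_r. apply qeq_qfilter; auto.
  - exists []. rewrite app_nil_r. destruct (Nat.eq_dec r p) as [->|].
    + rewrite (qeq_qfilter _ _ Hp'), (qeq_qfilter _ _ Hp).
      unfold qfilter; simpl. destruct (Nat.eqb_spec q' q); congruence.
    + apply qeq_qfilter; auto.
Qed.

Lemma send_ready_persists G a G' p q l : red_effect G a G' -> send_ready G p q l ->
  (exists l', a = LSnd p q l') \/ send_ready G' p q l.
Proof.
  intros R [bs Sk Tk Ht Hw Hin].
  destruct (Nat.eq_dec (subject a) p) as [E|E]; [left|right].
  - destruct R as [G' p' q' l' _ [bs' _ _ Ht' _ _] _ _ _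
                   |G' q' p' l' _ _ [_ _ bs' _ _ _ _ Ht' _ _ _] _ _ _ _];
      simpl in E; subst.
    + exists l'. f_equal. apply (teq_sel_inj q' bs' q bs). rewrite <- Ht, Ht'. reflexivity.
    + exfalso. apply (teq_sel_bra q bs p' bs'). rewrite <- Ht, Ht'. reflexivity.
  - apply (SendReady G' p q l bs Sk Tk); auto.
    rewrite (red_effect_type_frame G a G' p R); auto.
Qed.

Lemma rcv_ready_persists G a G' q p l : red_effect G a G' -> rcv_ready G q p l ->
  a = LRcv q p l \/ rcv_ready G' q p l.
Proof.
  intros R [S' f bs Sk Tk Hpq Hf Ht Hw Hin Hs].
  destruct (Nat.eq_dec (subject a) q) as [E|E]; [left|right].
  - destruct R as [G' q' p' l' _ [bs' _ _ Ht' _ _] _ _ _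
                   |G' q' p' l' _ _ [S'' f' bs' _ _ _ Hf' Ht' _ _ _] _ _ _ _];
      simpl in E; subst.
    + exfalso. apply (teq_sel_bra p' bs' p bs). rewrite <- Ht, Ht'. reflexivity.
    + assert (p' = p) as ->.
      { apply (teq_bra_inj p' bs' p bs). rewrite <- Ht, Ht'. reflexivity. }
      rewrite Hf in Hf'. injection Hf' as ->. reflexivity.
  - destruct (red_effect_qfilter_app G a G' q p R E) as [t Hqt].
    apply (RcvReady G' q p l S' (f ++ t) bs Sk Tk); auto.
    + rewrite Hqt, Hf. reflexivity.
    + rewrite (red_effect_type_frame G a G' q R); auto.
Qed.

Definition cons_path (G : env) (g : nat -> env) (n : nat) : env :=
  match n with 0 => G | S n => g n end.

Lemma inI_succ len i : inI (option_map S len) (S i) <-> inI len i.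
Proof. destruct len; simpl; lia. Qed.

Lemma is_path_cons G a g len :
  red G a (g 0) -> is_path g len -> is_path (cons_path G g) (option_map S len).
Proof.
  intros R P [|i] Hi; simpl.
  - exists a; exact R.
  - apply P, inI_succ, Hi.
Qed.

Lemma fair_cons G a g len : red G a (g 0) -> inI len 0 -> fair g len ->
  fair (cons_path G g) (option_map S len).
Proof.
  intros R H0 F [|i] Hi; simpl.
  - pose proof (red_red_effect G a (g 0) R) as Rs. split.
    + intros p q l H1 R1. apply red_red_effect, red_effect_ready in R1.
      destruct (send_ready_persists G a (g 0) p q l Rs R1) as [[l' ->]|R2].
      * exists 0, l'. repeat split; [lia | apply inI_succ, H0 | exact R].
      * destruct (send_ready_red _ _ _ _ R2) as [H2 R3].
        destruct (proj1 (F 0 H0) p q l H2 R3) as (k & l' & Hk & Hin & Rk).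
        exists (S k), l'. repeat split; [lia | apply inI_succ, Hin | exact Rk].
    + intros q p l H1 R1. apply red_red_effect, red_effect_ready in R1.
      destruct (rcv_ready_persists G a (g 0) q p l Rs R1) as [->|R2].
      * exists 0. repeat split; [lia | apply inI_succ, H0 | exact R].
      * destruct (rcv_ready_red _ _ _ _ R2) as [H2 R3].
        destruct (proj2 (F 0 H0) q p l H2 R3) as (k & Hk & Hin & Rk).
        exists (S k). repeat split; [lia | apply inI_succ, Hin | exact Rk].
  - rewrite inI_succ in Hi. destruct (F i Hi) as [Fs Fr]. split.
    + intros p q l H1 R1. destruct (Fs p q l H1 R1) as (k & l' & Hk & Hin & Rk).
      exists (S k), l'. repeat split; [lia | apply inI_succ, Hin | exact Rk].
    + intros q p l H1 R1. destruct (Fr q p l H1 R1) as (k & Hk & Hin & Rk).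
      exists (S k). repeat split; [lia | apply inI_succ, Hin | exact Rk].
Qed.

Lemma live_path_uncons G g len :
  live_path (cons_path G g) (option_map S len) -> live_path g len.
Proof.
  intros L i Hi. destruct (L (S i) (proj2 (inI_succ len i) Hi)) as [Lq Lt]. split.
  - intros p q l s sq T e He Ee. destruct (Lq p q l s sq T e He Ee) as ([|k] & Hk & Hin & Rk);
      [lia|].
    exists k. repeat split; [lia | apply inI_succ, Hin | exact Rk].
  - intros p q sq bs e He Ee. destruct (Lt p q sq bs e He Ee) as ([|k] & l' & Hk & Hin & Rk);
      [lia|].
    exists k, l'. repeat split; [lia | apply inI_succ, Hin | exact Rk].
Qed.

Theorem proposition4p6 (G G' : env) :
  live G -> step G G' -> live G'.
Proof.
  intros Hlive [a R] g len H0 Hg0 Hpath Hfair.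
  assert (R0 : red G a (g 0)).
  { apply (red_struct G G G' (g 0) a); auto; apply env_eq_efun; auto. }
  apply (live_path_uncons G), Hlive.
  - destruct len; simpl in *; lia.
  - reflexivity.
  - exact (is_path_cons G a g len R0 Hpath).
  - exact (fair_cons G a g len R0 H0 Hfair).
Qed.
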